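(* Let $\phi : X \to Y$ be an open code between shift spaces. If $\phi$ is constant-to-one, then $\phi$ is bi-closing.
   Context: Shift spaces are closed shift-invariant subsets of $\mathcal{A}^{\mathbb{Z}}$; a code is a continuous shift-commuting map. Open: images of open sets are open. Constant-to-one: all fibers finite of cardinality independent of $y \in Y$. Bi-closing: never identifies two distinct left asymptotic points nor two distinct right asymptotic points, where $x,\bar x$ are left (right) asymptotic if $d(\sigma^{-n}x,\sigma^{-n}\bar x)\to0$ ($d(\sigma^{n}x,\sigma^{n}\bar x)\to0$), $d(x,\bar x)=2^{-k}$ with $k$ maximal such that $x_{[-k,k]}=\bar x_{[-k,k]}$. *)

From mathcomp Require Import all_boot.
From Stdlib Require Import ZArith List.
Open Scope Z_scope.

Definition seqA (A : Type) := Z -> A.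

Definition shift {A : Type} (x : seqA A) : seqA A := fun i => x (i + 1).
Definition shiftn {A : Type} (n : Z) (x : seqA A) : seqA A := fun i => x (i + n).

(* x_[-k,k] = y_[-k,k] ; with the metric d(x,y) = 2^{-k} (k maximal),
   d(x,y) <= 2^{-k} iff agree k x y *)
Definition agree {A : Type} (k : nat) (x y : seqA A) : Prop :=
  forall i : Z, Z.abs i <= Z.of_nat k -> x i = y i.

Definition closed_set {A : Type} (X : seqA A -> Prop) : Prop :=
  forall x, (forall k, exists y, X y /\ agree k x y) -> X x.

Definition rel_open {A : Type} (X U : seqA A -> Prop) : Prop :=
  forall x, U x -> exists k, forall y, X y -> agree k x y -> U y.

Definition shift_space (A : finType) (X : seqA A -> Prop) : Prop :=
  closed_set X /\ (forall x, X x <-> X (shift x)).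

Definition is_code {A B : finType} (X : seqA A -> Prop) (Y : seqA B -> Prop)
  (phi : seqA A -> seqA B) : Prop :=
  (forall x, X x -> Y (phi x)) /\
  (forall x, X x -> forall n, exists m, forall y, X y -> agree m x y ->
      agree n (phi x) (phi y)) /\
  (forall x, X x -> phi (shift x) = shift (phi x)).

Definition open_code {A B : finType} (X : seqA A -> Prop) (Y : seqA B -> Prop)
  (phi : seqA A -> seqA B) : Prop :=
  forall U, (forall x, U x -> X x) -> rel_open X U ->
    rel_open Y (fun y => exists x, U x /\ phi x = y).

Definition constant_to_one {A B : finType} (X : seqA A -> Prop)
  (Y : seqA B -> Prop) (phi : seqA A -> seqA B) : Prop :=
  exists c : nat, forall y, Y y ->
    exists s : list (seqA A), NoDup s /\ length s = c /\
      (forall x, In x s <-> (X x /\ phi x = y)).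

Definition left_asymptotic {A : Type} (x y : seqA A) : Prop :=
  forall k : nat, exists N : nat, forall n : nat, (N <= n)%nat ->
    agree k (shiftn (- Z.of_nat n) x) (shiftn (- Z.of_nat n) y).

Definition right_asymptotic {A : Type} (x y : seqA A) : Prop :=
  forall k : nat, exists N : nat, forall n : nat, (N <= n)%nat ->
    agree k (shiftn (Z.of_nat n) x) (shiftn (Z.of_nat n) y).

Definition bi_closing {A B : finType} (X : seqA A -> Prop)
  (phi : seqA A -> seqA B) : Prop :=
  (forall x x', X x -> X x' -> x <> x' -> left_asymptotic x x' -> phi x <> phi x') /\
  (forall x x', X x -> X x' -> x <> x' -> right_asymptotic x x' -> phi x <> phi x').

(* Fibers of a constant-to-one open code are uniformly discrete: there is a
   single window K such that two points of X with the same image which agree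
   on [-K, K] are equal.  Near a point z, openness lifts every point of the
   fiber over phi z to every fiber over a nearby y; these c lifts are distinct
   and so exhaust that fiber, which forces two points of one fiber close to z
   to coincide.  Compactness of A^Z turns this local statement into the uniform
   one.  Since phi commutes with the shift, two asymptotic points with the same
   image are shifted until they agree on [-K, K] and are therefore equal. *)
From Pilot Require Import Defs.
From mathcomp Require Import all_boot.
From Stdlib Require Import ZArith List Lia Classical IndefiniteDescription FunctionalExtensionality.
From mathcomp Require Import zify.
Open Scope Z_scope.

Lemma agree_refl {A : Type} k (x : seqA A) : agree k x x.
Proof. now intros i _. Qed.

Lemma agree_sym {A : Type} k (x y : seqA A) : agree k x y -> agree k y x.
Proof. intros H i Hi. symmetry. now apply H. Qed.

Lemma agree_trans {A : Type} k (x y z : seqA A) :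
  agree k x y -> agree k y z -> agree k x z.
Proof. intros H1 H2 i Hi. rewrite (H1 i Hi). now apply H2. Qed.

Lemma agree_le {A : Type} k k' (x y : seqA A) :
  (k' <= k)%nat -> agree k x y -> agree k' x y.
Proof. intros Hk H i Hi. apply H. lia. Qed.

Lemma list_uniform_bound {T : Type} (Q : nat -> T -> Prop) :
  (forall k k' w, (k <= k')%nat -> Q k w -> Q k' w) ->
  forall l : list T, (forall w, In w l -> exists k, Q k w) ->
  exists k, forall w, In w l -> Q k w.
Proof.
  intros Qmono l. induction l as [|a l IH]; intros H.
  - exists 0%nat. intros w [].
  - destruct (H a (in_eq a l)) as [k1 Hk1].
    destruct IH as [k2 Hk2]. { intros w Hw. apply H. now right. }
    exists (Nat.max k1 k2). intros w [<-|Hw].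
    + eapply Qmono; [|exact Hk1]. lia.
    + eapply Qmono; [|exact (Hk2 w Hw)]. lia.
Qed.

Lemma In_enum {T : finType} (x : T) : In x (enum T).
Proof.
  have : x \in enum T by rewrite mem_enum.
  elim: (enum T) => [|a l IH] //=.
  rewrite seq.in_cons => /orP [/eqP ->|H]; [now left|right; auto].
Qed.

Lemma fintype_uniform_bound {T : finType} (Q : nat -> T -> Prop) :
  (forall k k' w, (k <= k')%nat -> Q k w -> Q k' w) ->
  (forall w, exists k, Q k w) -> exists k, forall w, Q k w.
Proof.
  intros Qmono H. destruct (list_uniform_bound Q Qmono (enum T)) as [k Hk].
  - intros w _. apply H.
  - exists k. intro w. apply Hk, In_enum.
Qed.

Lemma distinct_disagree {A : Type} (x y : seqA A) : exists k, agree k x y -> x = y.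
Proof.
  destruct (classic (x = y)) as [E|E]; [now exists 0%nat|].
  assert (exists i, x i <> y i) as [i Hi].
  { apply NNPP. intro N. apply E, functional_extensionality. intro i.
    apply NNPP. intro N'. apply N. now exists i. }
  exists (Z.to_nat (Z.abs i)). intro Ha. exfalso. apply Hi, Ha. lia.
Qed.

Lemma list_separation {A : Type} (l : list (seqA A)) :
  exists m, forall w w', In w l -> In w' l -> agree m w w' -> w = w'.
Proof.
  induction l as [|a l [m1 Hm1]].
  - exists 0%nat. intros w w' [].
  - destruct (list_uniform_bound (fun k w' => agree k a w' -> a = w')) with (l := l)
      as [m2 Hm2].
    { intros k k' w Hk H1 H2. apply H1. eapply agree_le; eauto. }
    { intros w _. apply distinct_disagree. }
    exists (Nat.max m1 m2). intros w w' [<-|Hw] [<-|Hw'] Ha; auto.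
    + apply Hm2; auto. eapply agree_le; [|exact Ha]. lia.
    + symmetry. apply Hm2; auto. apply agree_sym. eapply agree_le; [|exact Ha]. lia.
    + apply Hm1; auto. eapply agree_le; [|exact Ha]. lia.
Qed.

Definition cluster_point {A : Type} (s : nat -> seqA A) (z : seqA A) : Prop :=
  forall k N, exists n, (N <= n)%nat /\ agree k z (s n).

Section Compactness.
Variables (A : finType) (s : nat -> seqA A).

(* Agreement on the open window (-k, k), so that level 0 is no constraint. *)
Definition agree_below (k : nat) (x y : seqA A) : Prop :=
  forall i : Z, Z.abs i < Z.of_nat k -> x i = y i.

Definition frequently_near (k : nat) (z : seqA A) : Prop :=
  forall N, exists n, (N <= n)%nat /\ agree_below k z (s n).

Definition patch (k : nat) (z : seqA A) (p : A * A) : seqA A :=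
  fun i => if Z.eqb i (Z.of_nat k) then p.2
           else if Z.eqb i (- Z.of_nat k) then p.1 else z i.

(* Pigeonhole over the finitely many ways of filling the coordinates -k and k. *)
Lemma frequently_near_refine k z :
  frequently_near k z -> exists z', agree_below k z z' /\ frequently_near (S k) z'.
Proof.
  intros Hz.
  destruct (classic (exists p, frequently_near (S k) (patch k z p))) as [[p Hp]|Hnone].
  { exists (patch k z p). split; [|exact Hp].
    intros i Hi. unfold patch.
    destruct (Z.eqb_spec i (Z.of_nat k)); [lia|].
    destruct (Z.eqb_spec i (- Z.of_nat k)); [lia|reflexivity]. }
  destruct (fintype_uniform_bound (fun N p => forall n, (N <= n)%nat ->
              ~ agree_below (S k) (patch k z p) (s n))) as [N HN].
  { intros N N' p HN Hp n Hn. apply Hp. lia. }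
  { intro p. apply NNPP. intro Hp. apply Hnone. exists p. intro N.
    apply NNPP. intro HN. apply Hp. exists N. intros n Hn Ha. apply HN. now exists n. }
  destruct (Hz N) as [n [HNn Hzn]].
  exfalso. apply (HN (s n (- Z.of_nat k), s n (Z.of_nat k)) n HNn).
  intros i Hi. unfold patch. simpl.
  destruct (Z.eqb_spec i (Z.of_nat k)); [now subst|].
  destruct (Z.eqb_spec i (- Z.of_nat k)); [now subst|].
  apply Hzn. lia.
Qed.

Lemma seqA_sequentially_compact : exists z, cluster_point s z.
Proof.
  destruct (functional_choice (fun (kz : nat * seqA A) z' =>
              frequently_near kz.1 kz.2 ->
              agree_below kz.1 kz.2 z' /\ frequently_near (S kz.1) z')) as [next Hnext].
  { intros [k z]. destruct (classic (frequently_near k z)) as [Hz|Hz].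
    - destruct (frequently_near_refine k z Hz) as [z' Hz']. now exists z'.
    - now exists z. }
  set (approx := fix approx k := match k with
                                 | O => s 0%nat
                                 | S k' => next (k', approx k')
                                 end).
  assert (Happrox : forall k, frequently_near k (approx k)).
  { induction k as [|k IH].
    - intro N. exists N. split; [lia|]. intros i Hi. lia.
    - exact (proj2 (Hnext (k, approx k) IH)). }
  assert (Hstable : forall k m : nat, agree_below k (approx k) (approx (k + m)%nat)).
  { intros k m. induction m as [|m IH].
    - rewrite addn0. now intros i _.
    - intros i Hi. rewrite (IH i Hi) addnS.
      apply (proj1 (Hnext ((k + m)%nat, approx (k + m)%nat) (Happrox _))). simpl. lia. }
  exists (fun i => approx (S (Z.to_nat (Z.abs i))) i).
  intros k N. destruct (Happrox (S k) N) as [n [HNn Hn]].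
  exists n. split; [exact HNn|]. intros i Hi. rewrite -(Hn i); [|lia].
  set (j := S (Z.to_nat (Z.abs i))).
  replace (S k) with (j + (S k - j))%nat by (unfold j; lia).
  apply Hstable. unfold j. lia.
Qed.

End Compactness.

Section FiberInjectivity.
Variables (A B : finType) (X : seqA A -> Prop) (Y : seqA B -> Prop)
  (phi : seqA A -> seqA B).
Hypothesis X_closed : closed_set X.
Hypothesis phi_maps : forall x, X x -> Y (phi x).
Hypothesis phi_continuous : forall x, X x -> forall n, exists m,
  forall y, X y -> agree m x y -> agree n (phi x) (phi y).
Hypothesis phi_open : open_code X Y phi.
Variable c : nat.
Hypothesis phi_fibers : forall y, Y y ->
  exists s : list (seqA A), NoDup s /\ length s = c /\
    (forall x, In x s <-> (X x /\ phi x = y)).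

Lemma open_lift w m : X w ->
  exists k, forall y, Y y -> agree k (phi w) y ->
    exists v, X v /\ agree m w v /\ phi v = y.
Proof.
  intros Xw.
  destruct (phi_open (fun v => X v /\ agree m w v)) with (x := phi w) as [k Hk].
  - tauto.
  - intros x [_ Hx]. exists m. intros v Xv Hxv. split; [exact Xv|].
    eapply agree_trans; eauto.
  - exists w. repeat split; auto using agree_refl.
  - exists k. intros y Yy Hy. destruct (Hk y Yy Hy) as [v [[Xv Hv] <-]]. now exists v.
Qed.

Lemma fiber_lift_uniform z m (F : list (seqA A)) :
  (forall w, In w F -> X w /\ phi w = phi z) ->
  exists k, forall w, In w F -> forall y, Y y -> agree k (phi z) y ->
    exists v, X v /\ agree m w v /\ phi v = y.
Proof.
  intros HF. apply list_uniform_bound.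
  - intros k k' w Hk H y Yy Hy. apply H; auto. eapply agree_le; eauto.
  - intros w Hw. destruct (HF w Hw) as [Xw <-]. now apply open_lift.
Qed.

(* The lifts of the c points of the fiber over phi z are c distinct points of
   the fiber over phi a, hence all of it; the only lift near z is that of z. *)
Lemma locally_injective_on_fibers z : X z ->
  exists k, forall a b, X a -> X b -> phi a = phi b ->
    agree k z a -> agree k z b -> a = b.
Proof.
  intros Xz.
  destruct (phi_fibers (phi z) (phi_maps z Xz)) as [F [HFnodup [HFlen HF]]].
  destruct (list_separation F) as [m Hsep].
  destruct (fiber_lift_uniform z m F) as [k1 Hlift]; [intros w; apply HF|].
  destruct (phi_continuous z Xz k1) as [m1 Hm1].
  exists (Nat.max m m1). intros a b Xa Xb Hab Hza Hzb.
  assert (Hya : agree k1 (phi z) (phi a)).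
  { apply Hm1; [exact Xa|]. eapply agree_le; [|exact Hza]. lia. }
  destruct (functional_choice (fun w v => In w F ->
              X v /\ agree m w v /\ phi v = phi a)) as [lift Hl].
  { intro w. destruct (classic (In w F)) as [Hw|Hw].
    - destruct (Hlift w Hw (phi a) (phi_maps a Xa) Hya) as [v Hv]. now exists v.
    - now exists w. }
  destruct (phi_fibers (phi a) (phi_maps a Xa)) as [L [_ [HLlen HL]]].
  assert (Hlifts_in : incl (map lift F) L).
  { intros x Hx. apply in_map_iff in Hx. destruct Hx as [w [<- Hw]].
    apply HL. destruct (Hl w Hw) as [? [_ ?]]. auto. }
  assert (Hlifts_nodup : NoDup (map lift F)).
  { apply NoDup_map_NoDup_ForallPairs; [|exact HFnodup].
    intros w w' Hw Hw' E. apply Hsep; auto.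
    eapply agree_trans; [apply (Hl w Hw)|]. rewrite E. apply agree_sym, (Hl w' Hw'). }
  assert (Hcover : incl L (map lift F)).
  { apply NoDup_length_incl; [exact Hlifts_nodup| |exact Hlifts_in].
    rewrite length_map. lia. }
  assert (Hnear : forall x, X x -> phi x = phi a -> agree m z x -> x = lift z).
  { intros x Xx Hx Hzx. assert (HxL : In x L) by (apply HL; auto).
    destruct (proj1 (in_map_iff _ _ _) (Hcover x HxL)) as [w [<- Hw]].
    f_equal. apply Hsep; [exact Hw|apply HF; auto|].
    eapply agree_trans; [apply (Hl w Hw)|]. now apply agree_sym. }
  assert (Hm : (m <= Nat.max m m1)%nat) by lia.
  rewrite (Hnear a Xa erefl (agree_le _ _ _ _ Hm Hza)).
  now rewrite (Hnear b Xb (esym Hab) (agree_le _ _ _ _ Hm Hzb)).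
Qed.

Lemma uniformly_injective_on_fibers :
  exists K, forall a b, X a -> X b -> phi a = phi b -> agree K a b -> a = b.
Proof.
  apply NNPP. intro Hnone.
  destruct (functional_choice (fun (K : nat) (p : seqA A * seqA A) =>
              X p.1 /\ X p.2 /\ phi p.1 = phi p.2 /\ agree K p.1 p.2 /\ p.1 <> p.2))
    as [pair Hpair].
  { intro K. apply NNPP. intro HK. apply Hnone. exists K. intros a b Xa Xb Hab HK'.
    apply NNPP. intro Hne. apply HK. now exists (a, b). }
  destruct (seqA_sequentially_compact A (fun n => (pair n).1)) as [z Hz].
  assert (Xz : X z).
  { apply X_closed. intro k. destruct (Hz k 0%nat) as [n [_ Hn]].
    exists (pair n).1. split; [apply Hpair|exact Hn]. }
  destruct (locally_injective_on_fibers z Xz) as [k Hk].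
  destruct (Hz k k) as [n [Hkn Hzn]].
  destruct (Hpair n) as [Xa [Xb [Hab [Hagree Hne]]]].
  apply Hne, Hk; auto.
  eapply agree_trans; [exact Hzn|]. eapply agree_le; [|exact Hagree]. lia.
Qed.

End FiberInjectivity.

Lemma shiftn_0 {A : Type} (x : seqA A) : shiftn 0 x = x.
Proof. apply functional_extensionality. intro i. unfold shiftn. f_equal. lia. Qed.

Lemma shift_shiftn {A : Type} n (x : seqA A) : Defs.shift (shiftn n x) = shiftn (Z.succ n) x.
Proof. apply functional_extensionality. intro i. unfold Defs.shift, shiftn. f_equal. lia. Qed.

Lemma shiftn_inj {A : Type} n (x y : seqA A) : shiftn n x = shiftn n y -> x = y.
Proof.
  intros E. apply functional_extensionality. intro i.
  pose proof (equal_f E (i - n)) as Ei. unfold shiftn in Ei.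
  now replace (i - n + n) with i in Ei by lia.
Qed.

Section ShiftOrbit.
Variables (A B : Type) (X : seqA A -> Prop) (phi : seqA A -> seqA B).
Hypothesis X_shift_invariant : forall x, X x <-> X (Defs.shift x).
Hypothesis phi_shift : forall x, X x -> phi (Defs.shift x) = Defs.shift (phi x).

Lemma shiftn_orbit n x : X x -> X (shiftn n x) /\ phi (shiftn n x) = shiftn n (phi x).
Proof.
  intros Xx. induction n as [|n [Xn Hn]|n [Xn Hn]] using Z.peano_ind.
  - now rewrite !shiftn_0.
  - rewrite -!shift_shiftn. split; [exact (proj1 (X_shift_invariant _) Xn)|].
    by rewrite phi_shift // Hn.
  - assert (Hpred : forall (C : Type) (u : seqA C), Defs.shift (shiftn (Z.pred n) u) = shiftn n u).
    { intros C u. by rewrite shift_shiftn Z.succ_pred. }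
    assert (Xp : X (shiftn (Z.pred n) x)) by (apply X_shift_invariant; by rewrite Hpred).
    split; [exact Xp|].
    apply (shiftn_inj 1). change (Defs.shift (phi (shiftn (Z.pred n) x))
                                 = Defs.shift (shiftn (Z.pred n) (phi x))).
    by rewrite -phi_shift // !Hpred.
Qed.

Lemma fiber_eq_of_shifted_agree K :
  (forall a b, X a -> X b -> phi a = phi b -> agree K a b -> a = b) ->
  forall n x x', X x -> X x' -> phi x = phi x' ->
    agree K (shiftn n x) (shiftn n x') -> x = x'.
Proof.
  intros HK n x x' Xx Xx' Hxx' Hn.
  destruct (shiftn_orbit n x Xx) as [Xn Hphin].
  destruct (shiftn_orbit n x' Xx') as [Xn' Hphin'].
  apply (shiftn_inj n), HK; auto. by rewrite Hphin Hphin' Hxx'.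
Qed.

End ShiftOrbit.

Theorem proposition2p10 (A B : finType) (X : seqA A -> Prop) (Y : seqA B -> Prop)
  (phi : seqA A -> seqA B) :
  shift_space A X -> shift_space B Y -> is_code X Y phi ->
  open_code X Y phi -> constant_to_one X Y phi -> bi_closing X phi.
Proof.
  intros [X_closed X_shift] _ [phi_maps [phi_continuous phi_shift]] phi_open [c phi_fibers].
  destruct (uniformly_injective_on_fibers A B X Y phi X_closed phi_maps
              phi_continuous phi_open c phi_fibers) as [K HK].
  pose proof (fiber_eq_of_shifted_agree A B X phi X_shift phi_shift K HK) as Hshifted.
  split; intros x x' Xx Xx' Hne Hasym Hxx'; apply Hne;
    destruct (Hasym K) as [N HN]; exact (Hshifted _ x x' Xx Xx' Hxx' (HN N (leqnn N))).
Qed.
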